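(* For all integers $q\ge1$ and $t\ge1$, $\mathsf{DEL}_{\mathrm{cor}}(q,t)\le \mathsf{INS}_{\mathrm{cor}}(q,t)$.
   Context: Let $[q]=\{0,1,\dots,q-1\}$. For $1\le m\le q$, a partial permutation of length $m$ over $[q]$ is a sequence of $m$ pairwise distinct elements of $[q]$. Let $\mathcal{S}_m^q$ be the set of those of length $m$ and $\mathcal{S}_{\mathrm{all}}^q=\bigcup_{m=1}^{q}\mathcal{S}_m^q$. A code is any subset of $\mathcal{S}_{\mathrm{all}}^q$. Juxtaposition $\omega\pi$ denotes concatenation with $\omega$ on the left. For $\pi=(\pi_1,\dots,\pi_m)$ and integer $j\ge 0$, $\pi_{\downarrow j}=(\pi_{k+1},\dots,\pi_m)$ with $k=\min(j,m-1)$; $\mathcal{B}_{\mathrm{del}}^t(\pi)=\{\pi_{\downarrow j}:0\le j\le t\}$. $\mathcal{B}_{\mathrm{ins}}^t(\pi)$ is the set of all $\omega\pi\in\mathcal{S}_{\mathrm{all}}^q$ with $\omega$ a (possibly empty) sequence of at most $t$ elements of $[q]$. For $X\in\{\mathrm{del},\mathrm{ins}\}$, a code $\mathcal{C}$ is $t$-tail-$X$-correcting if $\mathcal{B}_X^t(\pi_1)\cap\mathcal{B}_X^t(\pi_2)=\emptyset$ for all distinct $\pi_1,\pi_2\in\mathcal{C}$. $\mathsf{DEL}_{\mathrm{cor}}(q,t)$ and $\mathsf{INS}_{\mathrm{cor}}(q,t)$ denote the maximum sizes of $t$-tail-deletion-correcting and $t$-tail-insertion-correcting codes in $\mathcal{S}_{\mathrm{all}}^q$.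 *)

From mathcomp Require Import all_boot.
From mathcomp Require Import boolp.
Set Implicit Arguments. Unset Strict Implicit. Unset Printing Implicit Defensive.

(* Sequences over [q] = {0,...,q-1}, of length at most q: a finite type. *)
Definition word (q : nat) := {n : 'I_q.+1 & n.-tuple 'I_q}.
Definition wseq (q : nat) (w : word q) : seq nat := map val (tval (tagged w)).

Definition is_pperm (q : nat) (s : seq nat) : bool :=
  [&& 0 < size s, size s <= q, uniq s & all (fun x => x < q) s].

Definition tail_del (j : nat) (pi : seq nat) : seq nat :=
  drop (minn j (size pi).-1) pi.

Definition in_del_ball (t : nat) (pi s : seq nat) : Prop :=
  exists j, j <= t /\ s = tail_del j pi.

Definition in_ins_ball (q t : nat) (pi s : seq nat) : Prop :=
  exists omega : seq nat,
    [/\ size omega <= t, all (fun x => x < q) omega,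
        s = omega ++ pi & is_pperm q s].

Definition is_code (q : nat) (C : {set word q}) : Prop :=
  forall w, w \in C -> is_pperm q (wseq w).

Definition del_correcting (q t : nat) (C : {set word q}) : Prop :=
  is_code C /\
  forall w1 w2, w1 \in C -> w2 \in C -> w1 != w2 ->
    forall s, ~ (in_del_ball t (wseq w1) s /\ in_del_ball t (wseq w2) s).

Definition ins_correcting (q t : nat) (C : {set word q}) : Prop :=
  is_code C /\
  forall w1 w2, w1 \in C -> w2 \in C -> w1 != w2 ->
    forall s, ~ (in_ins_ball q t (wseq w1) s /\ in_ins_ball q t (wseq w2) s).

Definition DEL_cor (q t : nat) : nat :=
  \max_(C : {set word q} | `[< del_correcting t C >]) #|C|.

Definition INS_cor (q t : nat) : nat :=
  \max_(C : {set word q} | `[< ins_correcting t C >]) #|C|.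

From mathcomp Require Import all_boot.
From mathcomp Require Import boolp.
From mathcomp Require Import zify.

(* If [omega1 ++ pi1 = omega2 ++ pi2] with [pi1] no longer than [pi2], then
   [pi1] is [pi2] with its first [|omega1| - |omega2| <= t] symbols deleted,
   so [pi1] lies in the tail-deletion balls of both [pi1] and [pi2].  Hence
   overlapping insertion balls force overlapping deletion balls, and every
   t-tail-deletion-correcting code is t-tail-insertion-correcting. *)

Lemma eq_cat_drop (T : Type) (o1 o2 p1 p2 : seq T) :
  o1 ++ p1 = o2 ++ p2 -> size p1 <= size p2 ->
  p1 = drop (size o1 - size o2) p2.
Proof.
move=> E le_p12.
have size_eq : size o1 + size p1 = size o2 + size p2 by rewrite -!size_cat E.
have := congr1 (drop (size o1)) E.
rewrite drop_size_cat // drop_cat.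
by have -> : (size o1 < size o2) = false by lia.
Qed.

Lemma tail_del_drop (j : nat) (pi : seq nat) :
  j < size pi -> tail_del j pi = drop j pi.
Proof. by move=> lt_j; rewrite /tail_del; congr drop; lia. Qed.

Lemma in_del_ball_self (t : nat) (pi : seq nat) : in_del_ball t pi pi.
Proof. by exists 0; rewrite /tail_del min0n drop0. Qed.

Lemma in_del_ball_of_cat_eq (t : nat) (o1 o2 p1 p2 : seq nat) :
  0 < size p1 -> size o1 <= t -> o1 ++ p1 = o2 ++ p2 ->
  size p1 <= size p2 -> in_del_ball t p2 p1.
Proof.
move=> p1_gt0 o1_le E le_p12.
have size_eq : size o1 + size p1 = size o2 + size p2 by rewrite -!size_cat E.
exists (size o1 - size o2); split; first lia.
rewrite tail_del_drop; first exact: eq_cat_drop E le_p12.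
lia.
Qed.

Lemma del_correcting_ins_correcting (q t : nat) (C : {set word q}) :
  del_correcting t C -> ins_correcting t C.
Proof.
case=> codeC del_disj; split => // w1 w2 w1C w2C w12 s.
case=> -[o1 [o1_le _ E1 _]] [o2 [o2_le _ E2 _]].
have /and4P[p1_gt0 _ _ _] := codeC _ w1C.
have /and4P[p2_gt0 _ _ _] := codeC _ w2C.
have E : o1 ++ wseq w1 = o2 ++ wseq w2 by rewrite -E1 -E2.
have [le_p12 | /ltnW le_p21] := leqP (size (wseq w1)) (size (wseq w2)).
- apply: (del_disj _ _ w1C w2C w12 (wseq w1)).
  by split; [exact: in_del_ball_self | exact: in_del_ball_of_cat_eq E le_p12].
- apply: (del_disj _ _ w1C w2C w12 (wseq w2)).
  by split; [exact: in_del_ball_of_cat_eq (esym E) le_p21 | exact: in_del_ball_self].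
Qed.

Theorem mainTheorem5 (q t : nat) : 1 <= q -> 1 <= t -> DEL_cor q t <= INS_cor q t.
Proof.
move=> _ _; apply/bigmax_leqP => C /asboolP delC.
by apply: leq_bigmax_cond; apply/asboolP; exact: del_correcting_ins_correcting.
Qed.
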